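(* Let $S$ be an inverse semigroup, regarded as an algebraic structure in the language $\mathcal{L}=\{\cdot,{}^{-1}\}\cup\{s\mid s\in S\}$. If $S$ is an equational domain in the language $\mathcal{L}$, then $S$ is a group.
   Context: A semigroup $S$ is inverse if for every $s\in S$ there is a unique $s^{-1}\in S$ with $ss^{-1}s=s$ and $s^{-1}ss^{-1}=s^{-1}$. The language $\mathcal{L}$ consists of multiplication, the unary operation $s\mapsto s^{-1}$, and a constant symbol for every element of $S$ (interpreted as that element). For a finite set of variables $X=\{x_1,\dots,x_n\}$, a term of $\mathcal{L}$ is a finite product of variables raised to integer powers (negative powers meaning powers of the inverse) and constants from $S$. An equation is an equality $t(X)=s(X)$ of two terms; a system of equations is an arbitrary (possibly infinite) set of equations in $x_1,\dots,x_n$. The solution set in $S$ of a system $\mathbf{S}$ is the set of tuples in $S^n$ satisfying all its equations. A set $Y\subseteq S^n$ is algebraic over $S$ if it is the solution set of some system of equations in $x_1,\dots,x_n$. $S$ is an equational domain (in $\mathcal{L}$) if for every $n$, every finite union $Y_1\cup\dots\cup Y_k$ of algebraic sets $Y_i\subseteq S^n$ is algebraic. *)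

From mathcomp Require Import all_boot.
Set Implicit Arguments. Unset Strict Implicit. Unset Printing Implicit Defensive.

Definition is_inverse_semigroup (S : Type) (mul : S -> S -> S) (inv : S -> S) : Prop :=
  (forall a b c, mul a (mul b c) = mul (mul a b) c) /\
  (forall s, mul (mul s (inv s)) s = s /\ mul (mul (inv s) s) (inv s) = inv s) /\
  (forall s t, mul (mul s t) s = s -> mul (mul t s) t = t -> t = inv s).

Inductive term (S : Type) (n : nat) : Type :=
| TVar : 'I_n -> term S n
| TCst : S -> term S n
| TMul : term S n -> term S n -> term S n
| TInv : term S n -> term S n.

Fixpoint eval_term (S : Type) (mul : S -> S -> S) (inv : S -> S) (n : nat)
    (p : 'I_n -> S) (t : term S n) : S :=
  match t with
  | TVar i => p i
  | TCst s => s
  | TMul u v => mul (eval_term mul inv p u) (eval_term mul inv p v)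
  | TInv u => inv (eval_term mul inv p u)
  end.

Definition equation (S : Type) (n : nat) := (term S n * term S n)%type.
Definition system (S : Type) (n : nat) := equation S n -> Prop.

(* Points of S^n are functions 'I_n -> S; subsets of S^n are predicates. *)
Definition solution_set (S : Type) (mul : S -> S -> S) (inv : S -> S) (n : nat)
    (Sys : system S n) : ('I_n -> S) -> Prop :=
  fun p => forall e, Sys e -> eval_term mul inv p e.1 = eval_term mul inv p e.2.

Definition algebraic (S : Type) (mul : S -> S -> S) (inv : S -> S) (n : nat)
    (Y : ('I_n -> S) -> Prop) : Prop :=
  exists Sys : system S n, forall p, Y p <-> solution_set mul inv Sys p.

(* Equational domain: every finite (nonempty) union of algebraic sets is algebraic. *)
Definition equational_domain (S : Type) (mul : S -> S -> S) (inv : S -> S) : Prop :=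
  forall (n k : nat) (Ys : 'I_k.+1 -> ('I_n -> S) -> Prop),
    (forall i, algebraic mul inv (Ys i)) ->
    algebraic mul inv (fun p => exists i, Ys i p).

Definition is_group (S : Type) (mul : S -> S -> S) : Prop :=
  exists e : S, forall s, mul e s = s /\ mul s e = s /\
    exists t, mul s t = e /\ mul t s = e.

From mathcomp Require Import all_boot.
Set Implicit Arguments. Unset Strict Implicit. Unset Printing Implicit Defensive.

(* Call [w] a common restriction of [u] and [v] when [u = t e1], [v = t e2]
   and [w = t e1 e2] for some [t] and idempotents [e1], [e2].  This relation
   contains the diagonal and is preserved by products and inverses, so it is
   preserved by every term of the language; moreover [w] is determined by [u]
   and [v] (it equals [u v^-1 v]).  Hence every equation satisfied at two
   points is satisfied at their coordinatewise common restriction.  If there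
   are idempotents [e g = g <> e], the points [(e, g)] and [(g, e)] have the common
   restriction [(g, g)], so their union is not algebraic.  Otherwise the
   idempotents form an antichain; since [e f] lies below both [e] and [f],
   there is a single idempotent, and an inverse semigroup with a single
   idempotent is a group. *)

Definition idem (S : Type) (mul : S -> S -> S) (e : S) := mul e e = e.

Lemma algebraic_point (S : Type) (mul : S -> S -> S) (inv : S -> S) (n : nat)
    (p : 'I_n -> S) :
  algebraic mul inv (fun q => q =1 p).
Proof.
exists (fun eq => exists i, eq = (TVar S i, TCst n (p i))) => q; split.
  by move=> eq_qp _ [i ->] /=.
by move=> sol_q i; exact: sol_q (ex_intro _ i erefl).
Qed.

Section InverseSemigroup.

Variables (S : Type) (mul : S -> S -> S) (inv : S -> S).
Hypothesis invS : is_inverse_semigroup mul inv.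

Local Notation "x * y" := (mul x y).
Local Notation "x ^-1" := (inv x).
Local Notation idem := (idem mul).

Lemma mulA x y z : x * (y * z) = x * y * z.
Proof. by case: invS. Qed.

Lemma mul_invK s : s * s^-1 * s = s.
Proof. by case: invS => _ [idS _]; case: (idS s). Qed.

Lemma inv_mulK s : s^-1 * s * s^-1 = s^-1.
Proof. by case: invS => _ [idS _]; case: (idS s). Qed.

Lemma inv_uniq s t : s * t * s = s -> t * s * t = t -> t = s^-1.
Proof. by case: invS => _ [_]; apply. Qed.

Lemma invK s : (s^-1)^-1 = s.
Proof. by symmetry; apply: inv_uniq; [exact: inv_mulK | exact: mul_invK]. Qed.

Lemma idem_mulV s : idem (s * s^-1).
Proof. by rewrite /idem -mulA [s^-1 * _]mulA inv_mulK. Qed.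

Lemma idem_Vmul s : idem (s^-1 * s).
Proof. by rewrite /idem -mulA [s * _]mulA mul_invK. Qed.

Lemma idem_inv e : idem e -> e^-1 = e.
Proof. by move=> he; symmetry; apply: inv_uniq; rewrite !he. Qed.

Lemma idem_mulKl e x : idem e -> e * (e * x) = e * x.
Proof. by move=> he; rewrite mulA he. Qed.

(* The inverse [x] of [e f] satisfies [x = f x e] by uniqueness of inverses,
   which forces [x], hence [e f = x^-1], to be idempotent. *)
Lemma idemM e f : idem e -> idem f -> idem (e * f).
Proof.
move=> he hf; have := inv_mulK (e * f); set x := _^-1 => x_mulK.
have xK y : x * (e * (f * (x * y))) = x * y by rewrite -{3}x_mulK -!mulA.
have fxe : f * (x * e) = x.
  apply: inv_uniq; rewrite -!mulA (idem_mulKl _ hf) (idem_mulKl _ he) ?xK //.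
  by rewrite -[RHS]mul_invK -!mulA.
have idem_x : idem x by rewrite /idem -{1 2}fxe -!mulA xK.
by rewrite -[e * f]invK idem_inv.
Qed.

Lemma idemC e f : idem e -> idem f -> e * f = f * e.
Proof.
move=> he hf; rewrite -(idem_inv (idemM he hf)); symmetry; apply: inv_uniq.
  by rewrite -!mulA (idem_mulKl _ hf) (idem_mulKl _ he) mulA (idemM he hf).
by rewrite -!mulA (idem_mulKl _ he) (idem_mulKl _ hf) mulA (idemM hf he).
Qed.

Lemma idem_mulCA e f x : idem e -> idem f -> e * (f * x) = f * (e * x).
Proof. by move=> he hf; rewrite !mulA (idemC he hf). Qed.

Lemma mul_invKl s y : s * (s^-1 * (s * y)) = s * y.
Proof. by rewrite !mulA mul_invK. Qed.

Lemma inv_mulKl s y : s^-1 * (s * (s^-1 * y)) = s^-1 * y.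
Proof. by rewrite !mulA inv_mulK. Qed.

Lemma idem_shift e s : idem e -> exists2 f, idem f & e * s = s * f.
Proof.
move=> he; exists (s^-1 * (e * s)); last first.
  by rewrite !mulA (idemC (idem_mulV s) he) -[e * _ * s]mulA mul_invK.
rewrite /idem -!mulA [s * (s^-1 * _)]mulA (idem_mulCA _ he (idem_mulV s)).
by rewrite (idem_mulKl _ he) -mulA inv_mulKl.
Qed.

Lemma inv_mul_idem t e : idem e -> (t * e)^-1 = e * t^-1.
Proof.
move=> he; symmetry; apply: inv_uniq; rewrite -!mulA (idem_mulKl _ he)
  [t^-1 * _]mulA (idem_mulCA _ he (idem_Vmul t)).
  by rewrite he mulA [t * _]mulA mul_invK.
by rewrite (idem_mulKl _ he) (idem_mulCA _ (idem_Vmul t) he) inv_mulK.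
Qed.

Definition common_restriction u v w :=
  exists t e1 e2, [/\ idem e1, idem e2, u = t * e1, v = t * e2 & w = t * (e1 * e2)].

Lemma common_restriction_refl c : common_restriction c c c.
Proof.
exists c, (c^-1 * c), (c^-1 * c); rewrite (idem_Vmul c).
by split; rewrite ?mulA ?mul_invK //; exact: idem_Vmul.
Qed.

Lemma common_restrictionM u v w u' v' w' :
  common_restriction u v w -> common_restriction u' v' w' ->
  common_restriction (u * u') (v * v') (w * w').
Proof.
case=> t [e1 [e2 [h1 h2 -> -> ->]]] [t' [e1' [e2' [h1' h2' -> -> ->]]]].
have [f1 hf1 e1t'] := idem_shift t' h1; have [f2 hf2 e2t'] := idem_shift t' h2.
exists (t * t'), (f1 * e1'), (f2 * e2'); split; try exact: idemM.
- by rewrite -!mulA [e1 * (t' * e1')]mulA e1t' -mulA.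
- by rewrite -!mulA [e2 * (t' * e2')]mulA e2t' -mulA.
rewrite -!mulA [e2 * (t' * _)]mulA e2t' -mulA [e1 * (t' * _)]mulA e1t' -!mulA.
by rewrite (idem_mulCA _ h1' hf2).
Qed.

Lemma common_restrictionV u v w :
  common_restriction u v w -> common_restriction u^-1 v^-1 w^-1.
Proof.
case=> t [e1 [e2 [h1 h2 -> -> ->]]].
have [g1 hg1 e1t] := idem_shift t^-1 h1; have [g2 hg2 e2t] := idem_shift t^-1 h2.
exists t^-1, g1, g2; rewrite !inv_mul_idem //; last exact: idemM.
by split=> //; rewrite -mulA e2t mulA e1t -mulA.
Qed.

Lemma common_restriction_det u v w :
  common_restriction u v w -> w = u * (v^-1 * v).
Proof.
case=> t [e1 [e2 [h1 h2 -> -> ->]]].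
rewrite inv_mul_idem // -!mulA [t^-1 * (t * e2)]mulA (idem_mulCA _ h2 (idem_Vmul t)) h2.
by rewrite (idem_mulCA _ h1 (idem_Vmul t)) -[t^-1 * t * _]mulA mul_invKl.
Qed.

Lemma eval_common_restriction n (a b c : 'I_n -> S) :
  (forall i, common_restriction (a i) (b i) (c i)) ->
  forall t, common_restriction (eval_term mul inv a t) (eval_term mul inv b t)
                               (eval_term mul inv c t).
Proof.
move=> abc; elim=> [i|s|u IHu v IHv|u IHu] /=.
- exact: abc.
- exact: common_restriction_refl.
- exact: common_restrictionM.
- exact: common_restrictionV.
Qed.

Lemma solution_set_common_restriction n (Sys : system S n) (a b c : 'I_n -> S) :
  (forall i, common_restriction (a i) (b i) (c i)) ->
  solution_set mul inv Sys a -> solution_set mul inv Sys b ->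
  solution_set mul inv Sys c.
Proof.
move=> abc sol_a sol_b eq Sys_eq.
have [cr1 cr2] := (eval_common_restriction abc eq.1, eval_common_restriction abc eq.2).
by rewrite (common_restriction_det cr1) (common_restriction_det cr2)
           (sol_a _ Sys_eq) (sol_b _ Sys_eq).
Qed.

Lemma equational_domain_idem_antichain :
  equational_domain mul inv ->
  forall e g, idem e -> idem g -> e * g = g -> g = e.
Proof.
move=> ED e g he hg eg; have ge : g * e = g by rewrite -(idemC he hg).
pose a (j : 'I_2) := if val j == 0 then e else g.
pose b (j : 'I_2) := if val j == 0 then g else e.
pose Ys (i : 'I_2) (q : 'I_2 -> S) := q =1 if val i == 0 then a else b.
have [Sys defSys] := ED 2 1 Ys (fun i => algebraic_point _ _ _).
have sol_g : solution_set mul inv Sys (fun _ => g).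
  apply: (@solution_set_common_restriction _ _ a b).
  - move=> j; exists e; rewrite /a /b; case: (val j == 0).
      by exists e, g; split; rewrite ?mulA ?he.
    by exists g, e; split; rewrite ?mulA ?eg ?ge.
  - by apply/defSys; exists ord0.
  - by apply/defSys; exists ord_max.
have [i] := proj2 (defSys _) sol_g.
by rewrite /Ys; case: (val i == 0) => [/(_ ord0) | /(_ ord_max)].
Qed.

Lemma idem_eq_of_antichain e f :
  (forall x y, idem x -> idem y -> x * y = y -> y = x) ->
  idem e -> idem f -> e = f.
Proof.
move=> antichain he hf; have hef := idemM he hf.
have <- : e * f = e by apply: antichain; rewrite // idem_mulKl.
by apply: antichain; rewrite // (idemC he hf) idem_mulKl.
Qed.

Lemma group_of_unique_idem (s0 : S) :
  (forall e f, idem e -> idem f -> e = f) -> is_group mul.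
Proof.
move=> idem_eq; exists (s0 * s0^-1) => s.
have mulV_eq := idem_eq _ _ (idem_mulV s) (idem_mulV s0).
have Vmul_eq := idem_eq _ _ (idem_Vmul s) (idem_mulV s0).
split; first by rewrite -mulV_eq mul_invK.
split; first by rewrite -Vmul_eq mulA mul_invK.
by exists s^-1.
Qed.

End InverseSemigroup.

Theorem theorem3 (S : Type) (mul : S -> S -> S) (inv : S -> S) (s0 : S) :
  is_inverse_semigroup mul inv ->
  equational_domain mul inv ->
  is_group mul.
Proof.
move=> invS ED; apply: (group_of_unique_idem invS s0) => e f.
by apply: (idem_eq_of_antichain invS); exact: equational_domain_idem_antichain invS ED.
Qed.
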